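(* Let $R$ be a nontrivial locally finite commutative ring. Then for every alphabet $\Sigma$, $\mathrm{RevL}(R,\Sigma)$ equals the Boolean closure of $\mathrm{RevL}(\mathbb{B},\Sigma)$ (the smallest set of languages over $\Sigma$ containing $\mathrm{RevL}(\mathbb{B},\Sigma)$ and closed under complementation in $\Sigma^*$, finite unions and finite intersections); i.e., the class $\mathrm{RevL}(R)$ is the Boolean closure of $\mathrm{RevL}(\mathbb{B})$.
   Context: A ring is a semiring $(R,+,\cdot,0,1)$ whose additive monoid is an abelian group; nontrivial means $0\neq1$; locally finite means every subsemiring generated by a finite subset is finite. $\mathbb{B}=(\{0,1\},\lor,\land,0,1)$ is the Boolean semiring. For a semiring $S$ and finite nonempty alphabet $\Sigma$, a series is a map $r\colon\Sigma^*\to S$ with value $(r,w)$ and support $\mathrm{supp}(r)=\{w\mid(r,w)\neq0\}$. A weighted automaton over $S$ and $\Sigma$ is $\mathcal{A}=(Q,\sigma,\iota,\tau)$ with $Q$ finite, $\sigma\colon Q\times\Sigma\times Q\to S$, $\iota,\tau\colon Q\to S$; a run on $w=a_1\cdots a_t$ is $q_0a_1q_1\cdots a_tq_t$ with all $\sigma(q_{k-1},a_k,q_k)\neq0$, of weight $\iota(q_0)\sigma(q_0,a_1,q_1)\cdots\sigma(q_{t-1},a_t,q_t)\tau(q_t)$, and $(\|\mathcal{A}\|,w)$ is the sum of weights of all runs on $w$. $\mathcal{A}$ is reversible if for all $p,p',q,q'\in Q$, $a\in\Sigma$: $\sigma(p,a,q)\neq0\neq\sigma(p,a,q')$ implies $q=q'$,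 and $\sigma(p,a,q)\neq0\neq\sigma(p',a,q)$ implies $p=p'$. $\mathrm{RevL}(S,\Sigma)$ is the set of supports of series realised by reversible weighted automata over $S$ and $\Sigma$, and $\mathrm{RevL}(S)$ is the class of these over all alphabets. $\mathrm{RevL}(\mathbb{B},\Sigma)$ is exactly the set of languages recognised by reversible finite automata in the sense of Pin (transition relation deterministic and codeterministic, arbitrary sets of initial and final states). *)

From HB Require Import structures.
From mathcomp Require Import all_boot all_order all_algebra.

Set Implicit Arguments.
Unset Strict Implicit.
Unset Printing Implicit Defensive.

Import GRing.Theory.
Local Open Scope ring_scope.

Definition boolB : Type := bool.
HB.instance Definition _ := Choice.on boolB.
HB.instance Definition _ :=
  GRing.isNmodule.Build boolB orbA orbC orFb.
HB.instance Definition _ :=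
  GRing.Nmodule_isComNzSemiRing.Build boolB andbA andbC andTb
    andb_orl andFb isT.

Inductive gen_semiring (S : pzSemiRingType) (X : seq S) : S -> Prop :=
  | gen_in x : x \in X -> gen_semiring X x
  | gen_0 : gen_semiring X 0
  | gen_1 : gen_semiring X 1
  | gen_add x y : gen_semiring X x -> gen_semiring X y -> gen_semiring X (x + y)
  | gen_mul x y : gen_semiring X x -> gen_semiring X y -> gen_semiring X (x * y).

Definition locally_finite (S : pzSemiRingType) : Prop :=
  forall X : seq S, exists s : seq S, forall x, gen_semiring X x -> x \in s.

Section WA.
Variables (S : pzSemiRingType) (Sigma : finType) (Q : finType).
Variables (sigma : Q -> Sigma -> Q -> S) (iota tau : Q -> S).

(* [is_run p w qs]: p a_1 q_1 ... a_t q_t is a run on w = a_1...a_t,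
   with qs = [:: q_1; ...; q_t], all transitions having nonzero weight. *)
Fixpoint is_run (p : Q) (w : seq Sigma) (qs : seq Q) : bool :=
  match w, qs with
  | a :: w', q :: qs' => (sigma p a q != 0) && is_run q w' qs'
  | [::], [::] => true
  | _, _ => false
  end.

Fixpoint run_weight (p : Q) (w : seq Sigma) (qs : seq Q) : S :=
  match w, qs with
  | a :: w', q :: qs' => sigma p a q * run_weight q w' qs'
  | _, _ => tau p
  end.

Definition behaviour (w : seq Sigma) : S :=
  \sum_(q0 : Q) \sum_(qs : (size w).-tuple Q | is_run q0 w qs)
     iota q0 * run_weight q0 w qs.

Definition reversible : Prop :=
  (forall p q q' a, sigma p a q != 0 -> sigma p a q' != 0 -> q = q') /\
  (forall p p' q a, sigma p a q != 0 -> sigma p' a q != 0 -> p = p').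
End WA.

Definition language (Sigma : finType) := seq Sigma -> Prop.

Definition RevL (S : pzSemiRingType) (Sigma : finType) (L : language Sigma) : Prop :=
  exists (Q : finType) (sigma : Q -> Sigma -> Q -> S) (iota tau : Q -> S),
    reversible sigma /\
    forall w, L w <-> behaviour sigma iota tau w != 0.

Inductive bool_closure (Sigma : finType) (C : language Sigma -> Prop)
    : language Sigma -> Prop :=
  | bc_base L : C L -> bool_closure C L
  | bc_ext L L' : bool_closure C L -> (forall w, L w <-> L' w) -> bool_closure C L'
  | bc_compl L : bool_closure C L -> bool_closure C (fun w => ~ L w)
  | bc_union L1 L2 : bool_closure C L1 -> bool_closure C L2 ->
                     bool_closure C (fun w => L1 w \/ L2 w)
  | bc_inter L1 L2 : bool_closure C L1 -> bool_closure C L2 ->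
                     bool_closure C (fun w => L1 w /\ L2 w).

(* In a reversible automaton each state has at most one successor and one
   predecessor per letter, so a word has at most one run from each initial state,
   and the weight of that run is the product, over the transitions t, of
   weight(t)^(number of uses of t).  Over a commutative locally finite semiring the
   powers of the finitely many transition weights lie in a finite set of size N, so
   x^m = x^n as soon as m, n >= N and m = n mod N!.  Hence the behaviour on w only
   depends on the end states of the runs and, for every transition, on
   min(count, N) and count mod N!.  Each such condition is a Boolean combination of
   languages of reversible Boolean automata: the product of the automaton with a
   counter 0 -> 1 -> ... -> k that blocks after k, or with a cyclic counter.

   Conversely, series computed by deterministic and codeterministic automata with
   unit transition weights are closed under sum, product and negation (disjoint
   union and product of automata).  So every language of the Boolean closure has
   such a 0/1-valued indicator series (1 - f, f + g - fg and fg realise complement,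
   union and intersection), and over a nontrivial ring its support is the
   language. *)

From HB Require Import structures.
From mathcomp Require Import all_boot all_order all_algebra.
From mathcomp Require Import zify.

Set Implicit Arguments.
Unset Strict Implicit.
Unset Printing Implicit Defensive.
Import GRing.Theory.
Local Open Scope ring_scope.

Section DeterministicRuns.
Variables (Sigma Q : finType) (step : Q -> Sigma -> option Q).

Definition codeterministic : Prop :=
  forall p p' a q, step p a = Some q -> step p' a = Some q -> p = p'.

Fixpoint run_end (p : Q) (w : seq Sigma) : option Q :=
  if w is a :: w' then obind (run_end^~ w') (step p a) else Some p.

Fixpoint run_states (p : Q) (w : seq Sigma) : option (seq Q) :=
  if w is a :: w' then
    obind (fun q => omap (cons q) (run_states q w')) (step p a)
  else Some [::].

Fixpoint trans_count (t : Q * Sigma) (p : Q) (w : seq Sigma) : nat :=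
  if w is a :: w' then
    oapp (fun q => ((p, a) == t) + trans_count t q w')%N 0%N (step p a)
  else 0%N.

Lemma run_end_states p w : run_end p w = omap (last p) (run_states p w).
Proof.
elim: w p => [|a w IH] p //=.
by case: (step p a) => [q|] //=; rewrite IH; case: (run_states q w).
Qed.

Lemma size_run_states p w qs : run_states p w = Some qs -> size qs = size w.
Proof.
elim: w p qs => [|a w IH] p qs /=; first by case=> <-.
case: (step p a) => [q|] //=.
by case E: (run_states q w) => [qs'|] //= [<-] /=; rewrite (IH _ _ E).
Qed.

End DeterministicRuns.

Section StepConstructions.
Variables (Sigma Q1 Q2 : finType).
Variables (s1 : Q1 -> Sigma -> option Q1) (s2 : Q2 -> Sigma -> option Q2).
Hypotheses (codet1 : codeterministic s1) (codet2 : codeterministic s2).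

Definition sum_step (p : Q1 + Q2) (a : Sigma) : option (Q1 + Q2) :=
  match p with inl p1 => omap inl (s1 p1 a) | inr p2 => omap inr (s2 p2 a) end.

Lemma run_end_sum_inl p w : run_end sum_step (inl p) w = omap inl (run_end s1 p w).
Proof. by elim: w p => [|a w IH] p //=; case: (s1 p a). Qed.

Lemma run_end_sum_inr p w : run_end sum_step (inr p) w = omap inr (run_end s2 p w).
Proof. by elim: w p => [|a w IH] p //=; case: (s2 p a). Qed.

Lemma sum_step_codet : codeterministic sum_step.
Proof.
move=> [p|p] [p'|p'] a q /=.
- case E: (s1 p a) => [x|] //= [<-].
  by case: (s1 p' a) (codet1 (p' := p') E) => [y|] //= p_p' [y_x]; rewrite p_p' // y_x.
- by case: (s1 p a) => [x|] //= [<-]; case: (s2 p' a).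
- by case: (s2 p a) => [x|] //= [<-]; case: (s1 p' a).
- case E: (s2 p a) => [x|] //= [<-].
  by case: (s2 p' a) (codet2 (p' := p') E) => [y|] //= p_p' [y_x]; rewrite p_p' // y_x.
Qed.

Definition prod_step (p : Q1 * Q2) (a : Sigma) : option (Q1 * Q2) :=
  obind (fun q1 => omap (pair q1) (s2 p.2 a)) (s1 p.1 a).

Lemma run_end_prod_step p w :
  run_end prod_step p w =
  obind (fun q1 => omap (pair q1) (run_end s2 p.2 w)) (run_end s1 p.1 w).
Proof.
elim: w p => [|a w IH] [p1 p2] //=; rewrite /prod_step /=.
by case: (s1 p1 a) => [q1|] //=; case: (s2 p2 a) => [q2|] //=; case: (run_end s1 q1 w).
Qed.

Lemma prod_step_codet : codeterministic prod_step.
Proof.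
move=> [p1 p2] [p1' p2'] a [q1 q2]; rewrite /prod_step /=.
case E1: (s1 p1 a) => [x1|] //; case E2: (s2 p2 a) => [x2|] //= [<- <-].
case: (s1 p1' a) (codet1 (p' := p1') E1) => [y1|] // p1_p1'.
case: (s2 p2' a) (codet2 (p' := p2') E2) => [y2|] //= p2_p2' [y1x y2x].
by rewrite p1_p1' ?y1x // p2_p2' ?y2x.
Qed.

End StepConstructions.

Definition det_behaviour (S : pzSemiRingType) (Sigma Q : finType)
    (step : Q -> Sigma -> option Q) (iota tau : Q -> S) (w : seq Sigma) : S :=
  \sum_q0 iota q0 * oapp tau 0 (run_end step q0 w).

Section SupportedByStep.
Variables (S : pzSemiRingType) (Sigma Q : finType).
Variables (sigma : Q -> Sigma -> Q -> S) (iota tau : Q -> S).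
Variable step : Q -> Sigma -> option Q.
Hypothesis sigma_support : forall p a q, (sigma p a q != 0) = (step p a == Some q).

Lemma is_run_states p w qs : is_run sigma p w qs = (run_states step p w == Some qs).
Proof.
elim: w p qs => [|a w IH] p [|q qs] /=; rewrite ?sigma_support //.
- by case: (step p a) => [q|] //=; case: (run_states step q w).
- case: (step p a) => [q'|] //=; rewrite IH (inj_eq (@Some_inj _)).
  have [<-|neq] := eqVneq q' q; case: (run_states step q' w) => [x|] //=.
    by rewrite !(inj_eq (@Some_inj _)) eqseq_cons eqxx.
  by apply/esym/eqP => -[eq_q]; rewrite eq_q eqxx in neq.
Qed.

Lemma behaviour_run_states w :
  behaviour sigma iota tau w =
  \sum_q0 oapp (fun qs => iota q0 * run_weight sigma tau q0 w qs) 0 (run_states step q0 w).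
Proof.
apply: eq_bigr => q0 _; case E: (run_states step q0 w) => [qs|] /=; last first.
  by rewrite big_pred0 // => t; rewrite is_run_states E.
have size_qs : size qs == size w by rewrite (size_run_states E).
rewrite (big_pred1 (Tuple size_qs)) // => t; rewrite is_run_states E /=.
by apply/eqP/eqP => [[t_qs]|->] //; apply: val_inj.
Qed.

Lemma behaviour_unit_weights :
  (forall p a q, step p a = Some q -> sigma p a q = 1) ->
  behaviour sigma iota tau =1 det_behaviour step iota tau.
Proof.
move=> sigma1 w; rewrite behaviour_run_states; apply: eq_bigr => q0 _.
rewrite run_end_states; case E: (run_states step q0 w) => [qs|] /=; last by rewrite mulr0.
congr (_ * _); elim: w q0 qs E => [|a w IH] p qs /=; first by case=> <-.
case D: (step p a) => [q|] //=.
by case E: (run_states step q w) => [qs'|] //= [<-] /=; rewrite sigma1 // mul1r (IH _ _ E).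
Qed.

End SupportedByStep.

Lemma prod_expr_eq (S : comPzSemiRingType) (I : finType) (i0 : I) (F : I -> S) :
  \prod_i F i ^+ (i0 == i) = F i0.
Proof.
rewrite (bigD1 i0) //= eqxx big1 ?mulr1 // => i.
by rewrite eq_sym => /negbTE ->.
Qed.

Section CountedWeights.
Variables (S : comPzSemiRingType) (Sigma Q : finType).
Variables (sigma : Q -> Sigma -> Q -> S) (iota tau : Q -> S).
Variable step : Q -> Sigma -> option Q.

Definition trans_weight (t : Q * Sigma) : S := oapp (sigma t.1 t.2) 0 (step t.1 t.2).

Lemma run_weight_counts p w qs : run_states step p w = Some qs ->
  run_weight sigma tau p w qs =
  (\prod_t trans_weight t ^+ trans_count step t p w) * tau (last p qs).
Proof.
elim: w p qs => [|a w IH] p qs /=.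
  by case=> <-; rewrite big1 ?mul1r // => t _; rewrite expr0.
case D: (step p a) => [q|] //=.
case E: (run_states step q w) => [qs'|] //= [<-] /=.
under eq_bigr do rewrite exprD.
by rewrite big_split /= prod_expr_eq (IH _ _ E) /trans_weight D mulrA.
Qed.

Hypothesis sigma_support : forall p a q, (sigma p a q != 0) = (step p a == Some q).

Lemma behaviour_counts w :
  behaviour sigma iota tau w =
  \sum_q0 oapp (fun q => iota q0 *
      ((\prod_t trans_weight t ^+ trans_count step t q0 w) * tau q)) 0 (run_end step q0 w).
Proof.
rewrite (behaviour_run_states _ _ sigma_support); apply: eq_bigr => q0 _.
rewrite run_end_states; case E: (run_states step q0 w) => [qs|] //=.
by rewrite (run_weight_counts E).
Qed.

End CountedWeights.

Lemma RevL_ext (S : pzSemiRingType) (Sigma : finType) (L L' : language Sigma) :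
  RevL S L -> (forall w, L w <-> L' w) -> RevL S L'.
Proof.
move=> [Q [sigma [iota [tau [rev_sigma supp]]]]] LL'.
by exists Q, sigma, iota, tau; split=> // w; rewrite -LL'.
Qed.

Lemma boolr_neq0 (S : nzSemiRingType) (b : bool) : (b%:R != 0 :> S) = b.
Proof. by case: b; rewrite ?oner_neq0 ?eqxx. Qed.

Section SupportStep.
Variables (S : pzSemiRingType) (Sigma Q : finType) (sigma : Q -> Sigma -> Q -> S).
Hypothesis rev_sigma : reversible sigma.

Definition support_step (p : Q) (a : Sigma) : option Q := [pick q | sigma p a q != 0].

Lemma support_stepP p a q : (sigma p a q != 0) = (support_step p a == Some q).
Proof.
rewrite /support_step; case: pickP => [q' nz_q'|-> //].
apply/idP/eqP => [nz_q|[<-] //]; congr Some; exact: rev_sigma.1 nz_q' nz_q.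
Qed.

Lemma support_step_codet : codeterministic support_step.
Proof.
move=> p p' a q /eqP; rewrite -support_stepP => nz_p /eqP; rewrite -support_stepP.
exact: rev_sigma.2 nz_p.
Qed.

End SupportStep.

Section DeterministicLanguages.
Variables (Sigma Q : finType) (step : Q -> Sigma -> option Q).
Hypothesis codet_step : codeterministic step.

Lemma RevL_det_behaviour (S : nzSemiRingType) (iota tau : Q -> S) :
  RevL S (fun w => det_behaviour step iota tau w != 0).
Proof.
pose sigma p a q : S := (step p a == Some q)%:R.
have sigma_support p a q : (sigma p a q != 0) = (step p a == Some q) := boolr_neq0 S _.
exists Q, sigma, iota, tau; split; first split.
- move=> p q q' a; rewrite !sigma_support => /eqP step_p /eqP.
  by rewrite step_p => -[].
- by move=> p p' q a; rewrite !sigma_support => /eqP + /eqP; apply: codet_step.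
- move=> w; rewrite (behaviour_unit_weights _ _ sigma_support) // => p a q step_p.
  by rewrite /sigma step_p eqxx.
Qed.

Definition det_lang (q0 : Q) (F : pred Q) : language Sigma :=
  fun w => oapp F false (run_end step q0 w).

Lemma det_behaviour_single (S : pzSemiRingType) q0 (F : pred Q) w :
  det_behaviour step (fun q => (q == q0)%:R) (fun q => (F q)%:R) w =
  (oapp F false (run_end step q0 w))%:R :> S.
Proof.
rewrite /det_behaviour (bigD1 q0) //= big1 => [|q /negbTE -> //]; last exact: mul0r.
by rewrite eqxx mul1r addr0; case: (run_end step q0 w).
Qed.

Lemma RevL_det_lang q0 F : RevL boolB (det_lang q0 F).
Proof.
apply: RevL_ext (RevL_det_behaviour (fun q => (q == q0)%:R) (fun q => (F q)%:R)) _ => w.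
by rewrite det_behaviour_single boolr_neq0.
Qed.

End DeterministicLanguages.

Lemma neq0_boolB (b : boolB) : (b != 0) = b.
Proof. by case: b. Qed.

Lemma sum_boolB (I : finType) (F : I -> boolB) : \sum_i F i = [exists i, F i] :> bool.
Proof. exact: (big_orE _ F). Qed.

Lemma RevL_boolB_det_union (Sigma : finType) (L : language Sigma) : RevL boolB L ->
  exists (Q : finType) (step : Q -> Sigma -> option Q) (F : Q -> pred Q),
    codeterministic step /\ forall w, L w <-> exists q0, det_lang step q0 (F q0) w.
Proof.
move=> [Q [sigma [iota [tau [rev_sigma supp]]]]].
exists Q, (support_step sigma), (fun q0 q => iota q0 && tau q).
split=> [|w]; first exact: support_step_codet.
have sigma1 p a q : support_step sigma p a = Some q -> sigma p a q = 1.
  by move/eqP; rewrite -support_stepP //; case: (sigma p a q).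
rewrite supp (behaviour_unit_weights _ _ (support_stepP rev_sigma) sigma1).
rewrite /det_behaviour neq0_boolB sum_boolB /det_lang.
split=> [/existsP [q0 acc]|[q0 acc]]; [exists q0|apply/existsP; exists q0];
  by move: acc; case: (iota q0); case: (run_end _ q0 w).
Qed.

Section BooleanClosed.
Variable Sigma : finType.

Definition boolean_closed (C : language Sigma -> Prop) : Prop :=
  [/\ forall L L', C L -> (forall w, L w <-> L' w) -> C L',
      forall L, C L -> C (fun w => ~ L w),
      forall L1 L2, C L1 -> C L2 -> C (fun w => L1 w \/ L2 w),
      forall L1 L2, C L1 -> C L2 -> C (fun w => L1 w /\ L2 w)
    & C (fun _ => False)].

Lemma bool_closure_min (C0 C : language Sigma -> Prop) :
  boolean_closed C -> (forall L, C0 L -> C L) -> forall L, bool_closure C0 L -> C L.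
Proof.
case=> C_ext C_compl C_union C_inter _ C0C L.
elim=> {L} [L /C0C // | L L' _ CL | L _ /C_compl // | L1 L2 _ C1 _ C2 | L1 L2 _ C1 _ C2].
- exact: C_ext CL.
- exact: C_union C1 C2.
- exact: C_inter C1 C2.
Qed.

Variable C : language Sigma -> Prop.
Hypothesis C_closed : boolean_closed C.

Lemma boolean_closed_exists (X : finType) (F : X -> language Sigma) :
  (forall x, C (F x)) -> C (fun w => exists x, F x w).
Proof.
case: C_closed => C_ext _ C_union _ C_empty CF.
suff /(_ (enum X)) C_s : forall s : seq X, C (fun w => exists2 x, x \in s & F x w).
  by apply: C_ext C_s _ => w; split=> [[x _]|[x]]; exists x; rewrite ?mem_enum.
elim=> [|x s IH]; first by apply: C_ext C_empty _ => w; split=> // -[].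
apply: C_ext (C_union _ _ (CF x) IH) _ => w; split=> [[Fx|[y s_y Fy]]|[y]].
- by exists x; rewrite ?mem_head.
- by exists y; rewrite // inE s_y orbT.
- by rewrite inE => /orP[/eqP-> | s_y] Fy; [left | right; exists y].
Qed.

Lemma boolean_closed_forall (X : finType) (F : X -> language Sigma) :
  (forall x, C (F x)) -> C (fun w => forall x, F x w).
Proof.
case: C_closed => C_ext C_compl _ C_inter C_empty CF.
suff /(_ (enum X)) C_s : forall s : seq X, C (fun w => forall x, x \in s -> F x w).
  by apply: C_ext C_s _ => w; split=> Fw x; first apply: Fw; rewrite ?mem_enum.
elim=> [|x s IH]; first by apply: C_ext (C_compl _ C_empty) _ => w; split=> // _ x.
apply: C_ext (C_inter _ _ (CF x) IH) _ => w; split=> [[Fx Fs] y|Fw].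
- by rewrite inE => /orP[/eqP-> | /Fs].
- by split=> [|y s_y]; apply: Fw; rewrite inE ?eqxx ?s_y ?orbT.
Qed.

Lemma boolean_closed_preimage (X : finType) (g : seq Sigma -> X) :
  (forall x, C (fun w => g w = x)) -> forall P : pred X, C (fun w => P (g w)).
Proof.
case: C_closed => C_ext _ _ _ C_empty Cg P.
have C_Pfibre x : C (fun w => P x /\ g w = x).
  by case: (P x); [apply: C_ext (Cg x) _ | apply: C_ext C_empty _] => w; split=> // -[].
apply: C_ext (boolean_closed_exists C_Pfibre) _ => w.
by split=> [[x [Px ->]] | Pg] //; exists (g w).
Qed.

Lemma boolean_closed_ffun (I X : finType) (g : I -> seq Sigma -> X) :
  (forall i x, C (fun w => g i w = x)) -> forall f, C (fun w => [ffun i => g i w] = f).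
Proof.
case: C_closed => C_ext _ _ _ _ Cg f.
apply: C_ext (boolean_closed_forall (fun i => Cg i (f i))) _ => w.
by split=> [g_f | <- i]; [apply/ffunP => i; rewrite ffunE | rewrite ffunE].
Qed.

End BooleanClosed.

Lemma bool_closure_RevL_closed (Sigma : finType) :
  boolean_closed (bool_closure (@RevL boolB Sigma)).
Proof.
split; [exact: bc_ext | exact: bc_compl | exact: bc_union | exact: bc_inter |].
pose step (_ : unit) (_ : Sigma) : option unit := None.
have codet_step : codeterministic step by [].
apply: bc_ext (bc_base (RevL_det_lang codet_step tt pred0)) _.
by case.
Qed.

Section DeterministicSeries.
Variables (R : comNzRingType) (Sigma : finType).

Definition det_series (f : seq Sigma -> R) : Prop :=
  exists (Q : finType) (step : Q -> Sigma -> option Q) (iota tau : Q -> R),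
    codeterministic step /\ f =1 det_behaviour step iota tau.

Lemma det_series_ext f g : det_series f -> f =1 g -> det_series g.
Proof.
move=> [Q [step [iota [tau [codet fE]]]]] fg.
by exists Q, step, iota, tau; split=> // w; rewrite -fg.
Qed.

Lemma det_series_cst c : det_series (fun _ => c).
Proof.
exists unit, (fun _ _ => Some tt), (fun _ => c), (fun _ => 1).
split=> [p p' a q _ _ | w]; first by case: p; case: p'.
have run_tt p : run_end (fun _ _ => Some tt) p w = Some tt.
  by elim: w p => [|a w IH] [] //=.
by rewrite /det_behaviour (big_pred1 tt) ?run_tt ?mulr1 // => -[].
Qed.

Lemma det_series_opp f : det_series f -> det_series (fun w => - f w).
Proof.
move=> [Q [step [iota [tau [codet fE]]]]].
exists Q, step, (fun q => - iota q), tau; split=> // w.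
by rewrite fE /det_behaviour -sumrN; apply: eq_bigr => q _; rewrite mulNr.
Qed.

Lemma det_series_add f g : det_series f -> det_series g -> det_series (fun w => f w + g w).
Proof.
move=> [Q1 [s1 [i1 [t1 [codet1 fE]]]]] [Q2 [s2 [i2 [t2 [codet2 gE]]]]].
exists (Q1 + Q2)%type, (sum_step s1 s2),
  (fun p => match p with inl p1 => i1 p1 | inr p2 => i2 p2 end),
  (fun p => match p with inl p1 => t1 p1 | inr p2 => t2 p2 end).
split=> [|w]; first exact: sum_step_codet.
rewrite fE gE /det_behaviour big_sumType; congr (_ + _); apply: eq_bigr => p _.
  by rewrite run_end_sum_inl; case: (run_end s1 p w).
by rewrite run_end_sum_inr; case: (run_end s2 p w).
Qed.

Lemma det_series_mul f g : det_series f -> det_series g -> det_series (fun w => f w * g w).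
Proof.
move=> [Q1 [s1 [i1 [t1 [codet1 fE]]]]] [Q2 [s2 [i2 [t2 [codet2 gE]]]]].
exists (Q1 * Q2)%type, (prod_step s1 s2), (fun p => i1 p.1 * i2 p.2), (fun p => t1 p.1 * t2 p.2).
split=> [|w]; first exact: prod_step_codet.
rewrite fE gE /det_behaviour big_distrlr pair_bigA; apply: eq_bigr => -[p1 p2] _ /=.
rewrite run_end_prod_step /=.
case: (run_end s1 p1 w) => [q1|] /=; last by rewrite !mulr0 mul0r.
by case: (run_end s2 p2 w) => [q2|] /=; [rewrite mulrACA | rewrite !mulr0].
Qed.

End DeterministicSeries.

Section DeterministicIndicators.
Variables (R : comNzRingType) (Sigma : finType).

Definition det_indicated (L : language Sigma) : Prop :=
  exists b : seq Sigma -> bool,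
    det_series (fun w => (b w)%:R : R) /\ forall w, L w <-> b w.

Lemma det_indicated_closed : boolean_closed det_indicated.
Proof.
split.
- by move=> L L' [b [Sb Lb]] LL'; exists b; split=> [//|w]; rewrite -LL'.
- move=> L [b [Sb Lb]]; exists (fun w => ~~ b w).
  split=> [|w]; last by rewrite Lb; apply: rwP negP.
  apply: det_series_ext (det_series_add (det_series_cst _ 1) (det_series_opp Sb)) _.
  by move=> w; case: (b w); rewrite /= ?mulr1n ?mulr0n ?subrr ?subr0.
- move=> L1 L2 [b1 [Sb1 Lb1]] [b2 [Sb2 Lb2]].
  exists (fun w => b1 w || b2 w); split=> [|w]; last by rewrite Lb1 Lb2; apply: rwP orP.
  have S12 := det_series_add (det_series_add Sb1 Sb2) (det_series_opp (det_series_mul Sb1 Sb2)).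
  apply: det_series_ext S12 _.
  by move=> w; case: (b1 w) (b2 w) => [] []; rewrite /= ?mulr1n ?mulr0n;
    rewrite ?mulr1 ?mulr0 ?oppr0 ?addr0 ?add0r ?addrK.
- move=> L1 L2 [b1 [Sb1 Lb1]] [b2 [Sb2 Lb2]].
  exists (fun w => b1 w && b2 w); split=> [|w]; last by rewrite Lb1 Lb2; apply: rwP andP.
  apply: det_series_ext (det_series_mul Sb1 Sb2) _.
  by move=> w; case: (b1 w) (b2 w) => [] []; rewrite /= ?mulr1n ?mulr0n ?mulr1 ?mulr0.
- by exists (fun _ => false); split=> //; exact: det_series_cst.
Qed.

Lemma det_indicated_det_lang (Q : finType) (step : Q -> Sigma -> option Q) q0 F :
  codeterministic step -> det_indicated (det_lang step q0 F).
Proof.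
move=> codet; exists (fun w => oapp F false (run_end step q0 w)); split=> //.
exists Q, step, (fun q => (q == q0)%:R), (fun q => (F q)%:R); split=> // w.
by rewrite det_behaviour_single.
Qed.

Lemma RevL_boolB_det_indicated L : RevL boolB L -> det_indicated L.
Proof.
move=> /RevL_boolB_det_union [Q [step [F [codet LE]]]].
have [C_ext _ _ _ _] := det_indicated_closed.
have det_q0 q0 := det_indicated_det_lang q0 (F q0) codet.
by apply: C_ext (boolean_closed_exists det_indicated_closed det_q0) _ => w; rewrite LE.
Qed.

Lemma det_indicated_RevL L : det_indicated L -> RevL R L.
Proof.
move=> [b [[Q [step [iota [tau [codet bE]]]]] Lb]].
apply: RevL_ext (RevL_det_behaviour codet iota tau) _ => w.
by rewrite -bE boolr_neq0 Lb.
Qed.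

End DeterministicIndicators.

Lemma bool_closure_sub_RevL (R : comNzRingType) (Sigma : finType) (L : language Sigma) :
  bool_closure (@RevL boolB Sigma) L -> RevL R L.
Proof.
move=> /(bool_closure_min (@det_indicated_closed R Sigma) (@RevL_boolB_det_indicated R Sigma)).
exact: det_indicated_RevL.
Qed.

Section Counters.
Variables (Sigma Q : finType) (step : Q -> Sigma -> option Q) (t0 : Q * Sigma).
Hypothesis codet_step : codeterministic step.
Variables (C : finType) (h : C -> option C).
Hypothesis h_inj : forall c c' d, h c = Some d -> h c' = Some d -> c = c'.

Definition count_step (x : Q * C) (a : Sigma) : option (Q * C) :=
  obind (fun q => omap (pair q) (if (x.1, a) == t0 then h x.2 else Some x.2)) (step x.1 a).

Lemma iter_obind_None n : iter n (obind h) None = None.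
Proof. by elim: n => //= n ->. Qed.

Lemma run_end_count_step p c w :
  run_end count_step (p, c) w =
  obind (fun q => omap (pair q) (iter (trans_count step t0 p w) (obind h) (Some c)))
    (run_end step p w).
Proof.
elim: w p c => [|a w IH] p c //=; rewrite /count_step /=.
case: (step p a) => [q|] //=; case: eqP => _ /=; last exact: IH.
rewrite add0n -iterS iterSr /=; case: (h c) => [d|] /=; first exact: IH.
by rewrite iter_obind_None; case: (run_end step q w).
Qed.

Lemma count_step_codet : codeterministic count_step.
Proof.
move=> [p c] [p' c'] a [q d]; rewrite /count_step /=.
case E: (step p a) => [q1|] //=; case: (step p' a) (codet_step (p' := p') E) => [q2|] //= p_p'.
case U: (if _ then _ else _) => [d1|] //= [<- <-].
case U': (if _ then _ else _) => [d2|] //= [q2_q1 d2_d1].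
move: p_p' U U'; rewrite q2_q1 d2_d1 => /(_ erefl) <-.
by case: ifP => _ => [/h_inj/[apply]-> | [->] [->]].
Qed.

Lemma RevL_counter q0 c0 c :
  RevL boolB (fun w => run_end step q0 w != None /\
                       iter (trans_count step t0 q0 w) (obind h) (Some c0) = Some c).
Proof.
apply: RevL_ext (RevL_det_lang count_step_codet (q0, c0) (fun x => x.2 == c)) _ => w.
rewrite /det_lang run_end_count_step.
case: (run_end step q0 w) => [q|] /=; last by split=> // -[].
case: (iter _ _ _) => [d|] /=; last by split=> // -[].
by split=> [/eqP-> | [_ [->]]].
Qed.

End Counters.

Section CountLanguages.
Local Open Scope nat_scope.

Lemma iter_insub_succ k (c : 'I_k.+1) n :
  iter n (obind (fun d : 'I_k.+1 => insub d.+1)) (Some c) = insub (c + n).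
Proof.
elim: n => [|n IH]; first by rewrite addn0 valK.
rewrite iterS IH addnS; case: insubP => [u _ <- //|].
by rewrite -leqNgt => lt_k_cn; rewrite insubF // ltnNge ltnW.
Qed.

Lemma iter_obind_Some (T : Type) (f : T -> T) n x :
  iter n (obind (fun y => Some (f y))) (Some x) = Some (iter n f x).
Proof. by elim: n => //= n ->. Qed.

Lemma val_iter_ordS m (c : 'I_m) n : val (iter n (@ordS m) c) = (c + n) %% m.
Proof.
elim: n => [|n IH]; first by rewrite addn0 modn_small.
by rewrite iterS /= IH -addn1 modnDml addn1 addnS.
Qed.

Variables (Sigma Q : finType) (step : Q -> Sigma -> option Q).
Hypothesis codet_step : codeterministic step.
Variables (q0 : Q) (t0 : Q * Sigma).
Notation BCB := (bool_closure (@RevL boolB Sigma)).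
Notation defined w := (run_end step q0 w != None).
Notation count w := (trans_count step t0 q0 w).

Lemma bc_count_eq k : BCB (fun w => defined w /\ count w = k).
Proof.
have succ_inj (c c' d : 'I_k.+1) : insub c.+1 = Some d -> insub c'.+1 = Some d -> c = c'.
  case: insubP => // u _ u_c [u_d]; case: insubP => // v _ v_c [v_d].
  by apply/val_inj/succn_inj; rewrite -u_c -v_c u_d v_d.
apply: bc_ext (bc_base (RevL_counter t0 codet_step succ_inj q0 ord0 ord_max)) _ => w.
rewrite iter_insub_succ add0n; case: insubP => [u _ u_n|]; last first.
  by rewrite ltnS => /negP n_gt_k; split=> -[def eq_n] //; rewrite eq_n in n_gt_k.
split=> -[def E]; split=> //; first by case: E => u_max; rewrite -u_n u_max.
by congr Some; apply: val_inj; rewrite /= u_n E.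
Qed.

Lemma bc_count_mod m (r : 'I_m) : BCB (fun w => defined w /\ count w %% m = r).
Proof.
case: m r => [[] //|m] r.
have succ_inj (c c' d : 'I_m.+1) : Some (ordS c) = Some d -> Some (ordS c') = Some d -> c = c'.
  by move=> [<-] /Some_inj /ordS_inj.
apply: bc_ext (bc_base (RevL_counter t0 codet_step succ_inj q0 ord0 r)) _ => w.
rewrite iter_obind_Some; split=> -[def E]; split=> //.
  by case: E => <-; rewrite val_iter_ordS.
by congr Some; apply: val_inj; rewrite val_iter_ordS.
Qed.

End CountLanguages.

Section RunProfiles.
Local Open Scope nat_scope.
Variables (Sigma Q : finType) (step : Q -> Sigma -> option Q).
Hypothesis codet_step : codeterministic step.
Variables (N P : nat) (P_gt0 : 0 < P).
Notation BCB := (bool_closure (@RevL boolB Sigma)).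

Definition count_class (n : nat) : 'I_N.+1 * 'I_P :=
  (Ordinal (geq_minr n N : minn n N < N.+1), Ordinal (ltn_pmod n P_gt0)).

Definition run_profile (q0 : Q) (w : seq Sigma) :
    option (Q * {ffun Q * Sigma -> 'I_N.+1 * 'I_P}) :=
  omap (fun q => (q, [ffun t => count_class (trans_count step t q0 w)])) (run_end step q0 w).

Lemma bc_defined q0 : BCB (fun w => run_end step q0 w != None).
Proof.
apply: bc_ext (bc_base (RevL_det_lang codet_step q0 predT)) _ => w.
by rewrite /det_lang; case: (run_end step q0 w).
Qed.

Lemma bc_count_min q0 t0 k : k <= N ->
  BCB (fun w => run_end step q0 w != None /\ minn (trans_count step t0 q0 w) N = k).
Proof.
have [BC_ext _ _ BC_inter _] := bool_closure_RevL_closed Sigma.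
move=> le_kN; have [lt_kN | le_Nk] := ltnP k N.
  by apply: BC_ext (bc_count_eq codet_step q0 t0 k) _ => w; split=> -[def E]; split=> //; lia.
have bc_ge := boolean_closed_forall (bool_closure_RevL_closed Sigma)
  (fun j : 'I_N => bc_compl (bc_count_eq codet_step q0 t0 j)).
apply: BC_ext (BC_inter _ _ (bc_defined q0) bc_ge) _ => w.
split=> [[def ge_N] | [def E]]; split=> //.
  have [lt_cN|] := ltnP (trans_count step t0 q0 w) N; last lia.
  by case: (ge_N (Ordinal lt_cN)).
by move=> j [_ E']; move: (ltn_ord j); lia.
Qed.

Lemma bc_count_class q0 t0 c :
  BCB (fun w => run_end step q0 w != None /\ count_class (trans_count step t0 q0 w) = c).
Proof.
have [BC_ext _ _ BC_inter _] := bool_closure_RevL_closed Sigma.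
case: c => k r.
apply: BC_ext (BC_inter _ _ (bc_count_min q0 t0 (ltn_ord k)) (bc_count_mod codet_step q0 t0 r)) _.
move=> w; split=> [[[def min_k] [_ mod_r]] | [def [<- <-]]].
  by split=> //; congr pair; apply: val_inj.
by split; split.
Qed.

Lemma bc_run_profile q0 v : BCB (fun w => run_profile q0 w = v).
Proof.
have [BC_ext BC_compl _ BC_inter _] := bool_closure_RevL_closed Sigma.
case: v => [[q f]|]; last first.
  apply: BC_ext (BC_compl _ (bc_defined q0)) _ => w.
  by rewrite /run_profile; case: (run_end step q0 w); split=> // /(_ isT).
have bc_counts := boolean_closed_forall (bool_closure_RevL_closed Sigma)
  (fun t => bc_count_class q0 t (f t)).
apply: BC_ext (BC_inter _ _ (bc_base (RevL_det_lang codet_step q0 (pred1 q))) bc_counts) _ => w.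
rewrite /run_profile /det_lang; case: (run_end step q0 w) => [q'|] /=; last by split=> // -[].
split=> [[/eqP-> counts_f] | [<- class_f]].
  by congr (Some (_, _)); apply/ffunP => t; rewrite ffunE; case: (counts_f t).
by split=> // t; split=> //; rewrite -class_f ffunE.
Qed.

End RunProfiles.

Lemma gen_semiring_exp (S : pzSemiRingType) (X : seq S) x n :
  gen_semiring X x -> gen_semiring X (x ^+ n).
Proof.
move=> Xx; elim: n => [|n IH]; first exact: gen_1.
by rewrite exprS; apply: gen_mul.
Qed.

Lemma expr_eventually_periodic (S : pzSemiRingType) (s : seq S) (x : S) :
  (forall n, x ^+ n \in s) -> forall m n, (size s <= m)%N -> (size s <= n)%N ->
  m = n %[mod (size s)`!] -> x ^+ m = x ^+ n.
Proof.
move=> pow_s; set N := size s.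
have [i [j [lt_ij le_jN x_ij]]] : exists i j, [/\ (i < j)%N, (j <= N)%N & x ^+ i = x ^+ j].
  have sub_s : {subset [seq x ^+ k | k <- iota 0 N.+1] <= s} by move=> y /mapP[k _ ->].
  have not_uniq : ~~ uniq [seq x ^+ k | k <- iota 0 N.+1].
    by apply/negP => /uniq_leq_size /(_ sub_s); rewrite size_map size_iota ltnn.
  case: (uniqPn 0 not_uniq) => i [j [lt_ij]]; rewrite size_map size_iota => lt_jN.
  rewrite !(nth_map 0%N) ?size_iota ?(ltn_trans lt_ij) // !nth_iota ?(ltn_trans lt_ij) //.
  by exists i, j.
have x_step b : (i <= b)%N -> x ^+ (b + (j - i)) = x ^+ b.
  move=> le_ib; have -> : (b + (j - i) = (b - i) + j)%N by lia.
  by rewrite exprD -x_ij -exprD subnK.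
have x_shift b k : (i <= b)%N -> x ^+ (b + k * (j - i)) = x ^+ b.
  move=> le_ib; elim: k => [|k IH]; first by rewrite addn0.
  by rewrite mulSn addnA addnAC x_step ?IH // (leq_trans le_ib) ?leq_addr.
move=> m n le_Nm le_Nn mn; wlog le_mn : m n le_Nm le_Nn mn / (m <= n)%N.
  move=> wlog_mn; have [|/ltnW le_nm] := leqP m n; first exact: wlog_mn.
  by symmetry; apply: wlog_mn.
have d_dvd : (j - i %| n - m)%N.
  apply: dvdn_trans (dvdn_fact (_ : 0 < j - i <= N)%N) _; first lia.
  by rewrite -eqn_mod_dvd // eq_sym mn.
have le_im : (i <= m)%N by lia.
by rewrite -(subnKC le_mn) -(divnK d_dvd) x_shift.
Qed.

Lemma RevL_sub_bool_closure (S : comPzSemiRingType) (Sigma : finType) (L : language Sigma) :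
  locally_finite S -> RevL S L -> bool_closure (@RevL boolB Sigma) L.
Proof.
move=> lfS [Q [sigma [iota [tau [rev_sigma LE]]]]].
set step := support_step sigma; have codet := support_step_codet rev_sigma.
pose x t := trans_weight sigma step t.
have [s pow_s] : exists s : seq S, forall t n, x t ^+ n \in s.
  have [s gen_s] := lfS [seq x t | t <- enum {: Q * Sigma}].
  by exists s => t n; apply/gen_s/gen_semiring_exp/gen_in/map_f; rewrite mem_enum.
set N := size s; have P_gt0 : (0 < N`!)%N := fact_gt0 N.
pose rep (c : 'I_N.+1 * 'I_N`!) := if (c.1 < N)%N then val c.1 else (N * N`! + c.2)%N.
have expr_rep t n : x t ^+ n = x t ^+ rep (count_class N P_gt0 n).
  rewrite /rep /=; have [lt_nN | le_Nn] := ltnP n N.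
    by rewrite lt_nN.
  rewrite ltnn; apply: expr_eventually_periodic (pow_s t) _ _ le_Nn _ _.
    by rewrite (leq_trans (leq_pmulr _ P_gt0)) ?leq_addr.
  by rewrite modnMDl modn_mod.
pose H (v : {ffun Q -> option (Q * {ffun Q * Sigma -> 'I_N.+1 * 'I_N`!})}) : S :=
  \sum_q0 oapp (fun c : Q * {ffun _} => iota q0 * ((\prod_t x t ^+ rep (c.2 t)) * tau c.1))
    0 (v q0).
have behaviour_profile w :
    behaviour sigma iota tau w = H [ffun q0 => run_profile step N P_gt0 q0 w].
  rewrite (behaviour_counts _ _ (support_stepP rev_sigma)); apply: eq_bigr => q0 _.
  rewrite ffunE /run_profile; case: (run_end step q0 w) => [q|] //=.
  by congr (_ * (_ * _)); apply: eq_bigr => t _; rewrite ffunE -expr_rep.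
have BC_closed := bool_closure_RevL_closed Sigma.
have bc_profile := boolean_closed_ffun BC_closed (bc_run_profile codet (N := N) P_gt0).
apply: bc_ext (boolean_closed_preimage BC_closed bc_profile (fun v => H v != 0)) _.
by move=> w; rewrite LE behaviour_profile.
Qed.

Local Close Scope ring_scope.

Theorem theorem2 (R : comNzRingType) (HR : locally_finite R)
  (Sigma : finType) (HSigma : 0 < #|Sigma|) (L : language Sigma) :
  RevL R L <-> bool_closure (@RevL boolB Sigma) L.
Proof.
split; [exact: RevL_sub_bool_closure | exact: bool_closure_sub_RevL].
Qed.
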